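(* Fix $T>0$ and a continuous function $h$ on $[0,T]$ with $h(t)>0$. Assume that for every boundary function $s$ on $[0,T]$ the Fixed Boundary Neumann Problem with flux $h$ has a (classical) solution $U^s$. Let $\mathcal{R}$ be the Neumann boundary-update operator $$\mathcal{R}(s)(t)=\int_0^t h(z)\,dz-\int_0^{s(t)}U^s(x,t)\,dx,\qquad 0\le t\le T.$$ If $s_1,s_2$ are boundary functions with $s_1(t)\le s_2(t)$ for all $t\in[0,T]$, then $\mathcal{R}(s_1)(t)\ge \mathcal{R}(s_2)(t)$ for all $t\in[0,T]$.
   Context: A boundary function on $[0,T]$ is a function $s\in C([0,T])\cap C^1((0,T])$ with $s(0)=0$ and $s(t)>0$ for $t\in(0,T]$. For such $s$ let $Q_{s,T}=\{(x,t):0<x<s(t),\,0<t<T\}$. The Fixed Boundary Neumann Problem on $s$ with flux $h$ asks for $U\in C(\overline{Q_{s,T}})\cap C^{2,1}(Q_{s,T})$ with $U_x$ continuous on $\overline{Q_{s,T}}\setminus\{t=0\}$ such that $U_t=U_{xx}$ in $Q_{s,T}$, $U(0,0)=0$, $U(s(t),t)=0$ for $t\in[0,T]$, and $-U_x(0,t)=h(t)$ for $t\in(0,T]$. Its solution is denoted $U^s$. (For such solutions, $\mathcal{R}(s)(t)$ coincides with $-\int_0^t U^s_x(s(z),z)\,dz$.) *)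

From Stdlib Require Import Reals.
From Coquelicot Require Import Coquelicot.
Open Scope R_scope.

Definition cont_within (D : R -> Prop) (f : R -> R) (x : R) : Prop :=
  filterlim f (within D (locally x)) (locally (f x)).

Definition cont2_within (D : R -> R -> Prop) (F : R -> R -> R) (x t : R) : Prop :=
  filterlim (fun p : R * R => F (fst p) (snd p))
    (within (fun p : R * R => D (fst p) (snd p)) (locally (x, t)))
    (locally (F x t)).

Definition has_deriv_within (D : R -> Prop) (f : R -> R) (x l : R) : Prop :=
  filterlim (fun y => (f y - f x) / (y - x))
    (within (fun y => D y /\ y <> x) (locally x)) (locally l).

Definition clI (T : R) (t : R) : Prop := 0 <= t <= T.
Definition ocI (T : R) (t : R) : Prop := 0 < t <= T.

Definition boundary_fun (T : R) (s : R -> R) : Prop :=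
  (forall t, clI T t -> cont_within (clI T) s t) /\
  (exists s' : R -> R,
      (forall t, ocI T t -> has_deriv_within (ocI T) s t (s' t)) /\
      (forall t, ocI T t -> cont_within (ocI T) s' t)) /\
  s 0 = 0 /\
  (forall t, ocI T t -> 0 < s t).

Definition Qst (T : R) (s : R -> R) (x t : R) : Prop :=
  0 < x < s t /\ 0 < t < T.
Definition Qst_bar (T : R) (s : R -> R) (x t : R) : Prop :=
  0 <= x <= s t /\ 0 <= t <= T.
Definition Qst_bar_pos (T : R) (s : R -> R) (x t : R) : Prop :=
  0 <= x <= s t /\ 0 < t <= T.

Definition Dx (U : R -> R -> R) (x t : R) : R := Derive (fun y => U y t) x.
Definition Dt (U : R -> R -> R) (x t : R) : R := Derive (fun tau => U x tau) t.

(* Classical solution of the Fixed Boundary Neumann Problem on s with flux h.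
   "U_x continuous on closure \ {t=0}" is read as: U_x (defined in Q) extends
   to a function Ux which is continuous on closure \ {t=0}; the Neumann
   condition refers to this extension. *)
Definition FBNP_sol (T : R) (s h : R -> R) (U : R -> R -> R) : Prop :=
  (forall x t, Qst_bar T s x t -> cont2_within (Qst_bar T s) U x t) /\
  (forall x t, Qst T s x t ->
     ex_derive (fun y => U y t) x /\
     ex_derive (fun y => Dx U y t) x /\
     ex_derive (fun tau => U x tau) t /\
     cont2_within (fun _ _ => True) (Dx U) x t /\
     cont2_within (fun _ _ => True) (Dx (Dx U)) x t /\
     cont2_within (fun _ _ => True) (Dt U) x t) /\
  (exists Ux : R -> R -> R,
     (forall x t, Qst T s x t -> Ux x t = Dx U x t) /\
     (forall x t, Qst_bar_pos T s x t -> cont2_within (Qst_bar_pos T s) Ux x t) /\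
     (forall t, ocI T t -> - Ux 0 t = h t)) /\
  (forall x t, Qst T s x t -> Dt U x t = Dx (Dx U) x t) /\
  U 0 0 = 0 /\
  (forall t, clI T t -> U (s t) t = 0).

(* Neumann boundary-update operator, for a choice Usol s = U^s of solutions *)
Definition Rop (h : R -> R) (Usol : (R -> R) -> R -> R -> R) (s : R -> R) (t : R) : R :=
  RInt h 0 t - RInt (fun x => Usol s x t) 0 (s t).

(* With [U_i = U^{s_i}], [R(s_1)(t) - R(s_2)(t)] equals the integral of [U_2 - U_1]
   over [[0, s_1(t)]] plus that of [U_2] over [[s_1(t), s_2(t)]], so it suffices that
   [U_2 >= 0] and [U_2 >= U_1] on the smaller domain.  Both follow from the weak maximum
   principle for the heat equation on [Q_s] with nonpositive flux [W_x(0,t) <= 0] and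
   nonnegative values on [x = s(t)]: for [U_2] the flux is [-h < 0] and the boundary
   value is 0, for [U_2 - U_1] the flux is 0 and the boundary value is [U_2(s_1(t), t)].
   The maximum principle is proved for [W + eps (t + exp (- x))], a strict supersolution
   with strictly negative flux: on the supremum of the times up to which it is positive,
   a zero can neither be interior ([V_t <= 0 <= V_xx]), nor at [x = 0] (where [V]
   decreases in [x]), nor on [x = s(t)]; positivity then persists a little further by
   compactness of the slice. *)

From Stdlib Require Import Reals Lra Classical ClassicalEpsilon.
From Coquelicot Require Import Coquelicot.
Open Scope R_scope.

Lemma cont_within_ball D f x : cont_within D f x ->
  forall eps, 0 < eps -> exists del, 0 < del /\
    forall y, D y -> Rabs (y - x) < del -> Rabs (f y - f x) < eps.
Proof.
  intros Hf eps Heps.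
  destruct (proj1 (filterlim_locally _ _) Hf (mkposreal eps Heps)) as [del Hdel].
  exists del; split; [apply cond_pos|]. intros y Dy Hy. exact (Hdel y Hy Dy).
Qed.

Lemma cont2_within_ball D F x t : cont2_within D F x t ->
  forall eps, 0 < eps -> exists del, 0 < del /\
    forall x' t', D x' t' -> Rabs (x' - x) < del -> Rabs (t' - t) < del ->
      Rabs (F x' t' - F x t) < eps.
Proof.
  intros HF eps Heps.
  destruct (proj1 (filterlim_locally _ _) HF (mkposreal eps Heps)) as [del Hdel].
  exists del; split; [apply cond_pos|].
  intros x' t' Dxt Hx Ht. exact (Hdel (x', t') (conj Hx Ht) Dxt).
Qed.

Lemma cont2_within_subdomain (D D' : R -> R -> Prop) F x t :
  (forall x t, D' x t -> D x t) -> cont2_within D F x t -> cont2_within D' F x t.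
Proof.
  intros HD HF. eapply filterlim_filter_le_1; [|exact HF].
  intros P HP. apply (filter_imp _ _ (fun p H Dp => H (HD _ _ Dp)) HP).
Qed.

Lemma cont2_within_plus D F G x t :
  cont2_within D F x t -> cont2_within D G x t ->
  cont2_within D (fun x t => F x t + G x t) x t.
Proof. intros HF HG. exact (filterlim_comp_2 _ _ _ HF HG (filterlim_plus _ _)). Qed.

Lemma cont2_within_opp D F x t :
  cont2_within D F x t -> cont2_within D (fun x t => - F x t) x t.
Proof.
  intros HF.
  exact (filterlim_comp _ _ _ (fun p : R * R => F (fst p) (snd p)) Ropp _ _ _ HF
           (filterlim_opp (F x t))).
Qed.

Lemma cont2_within_of_continuity_2d D F x t :
  continuity_2d_pt F x t -> cont2_within D F x t.
Proof.
  intros HF. eapply filterlim_filter_le_1; [|exact (proj1 (continuity_2d_pt_filterlim _ _ _) HF)].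
  intros P HP. exact (filter_imp _ _ (fun p H _ => H) HP).
Qed.

Lemma is_derive_le0_left f a l : is_derive f a l ->
  (exists d, 0 < d /\ forall e, 0 < e < d -> f a <= f (a - e)) -> l <= 0.
Proof.
  intros Hd [d [Hd0 Hle]]. apply is_derive_Reals in Hd.
  destruct (Rle_or_lt l 0) as [ok|Hl]; [exact ok|exfalso].
  destruct (Hd (l / 2)) as [r Hr]; [lra|].
  set (e := Rmin d r / 2).
  assert (0 < Rmin d r) by (apply Rmin_pos; [lra|apply cond_pos]).
  pose proof (Rmin_l d r). pose proof (Rmin_r d r).
  assert (He : 0 < e < d) by (unfold e; lra).
  specialize (Hr (- e) ltac:(lra) ltac:(rewrite Rabs_left; unfold e in *; lra)).
  replace (a + - e) with (a - e) in Hr by ring.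
  apply Rabs_def2 in Hr. specialize (Hle e He).
  assert ((f (a - e) - f a) / - e <= 0).
  { replace ((f (a - e) - f a) / - e) with (- ((f (a - e) - f a) / e)) by (field; lra).
    unfold Rdiv. pose proof (Rinv_0_lt_compat e ltac:(lra)). nra. }
  lra.
Qed.

Lemma is_derive_ge0_right f a l : is_derive f a l ->
  (exists d, 0 < d /\ forall e, 0 < e < d -> f a <= f (a + e)) -> 0 <= l.
Proof.
  intros Hd [d [Hd0 Hle]]. apply is_derive_Reals in Hd.
  destruct (Rle_or_lt 0 l) as [ok|Hl]; [exact ok|exfalso].
  destruct (Hd (- l / 2)) as [r Hr]; [lra|].
  set (e := Rmin d r / 2).
  assert (0 < Rmin d r) by (apply Rmin_pos; [lra|apply cond_pos]).
  pose proof (Rmin_l d r). pose proof (Rmin_r d r).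
  assert (He : 0 < e < d) by (unfold e; lra).
  specialize (Hr e ltac:(lra) ltac:(rewrite Rabs_right; unfold e in *; lra)).
  apply Rabs_def2 in Hr. specialize (Hle e He).
  assert (0 <= (f (a + e) - f a) / e).
  { unfold Rdiv. pose proof (Rinv_0_lt_compat e ltac:(lra)). nra. }
  lra.
Qed.

Lemma is_derive2_ge0_at_min (f g : R -> R) a b x0 L : a < x0 < b ->
  (forall x, a < x < b -> is_derive f x (g x)) -> is_derive g x0 L ->
  (forall x, a < x < b -> f x0 <= f x) -> 0 <= L.
Proof.
  intros Hx Hf Hg Hmin.
  assert (Hg0 : g x0 = 0).
  { apply Rle_antisym.
    - apply (is_derive_le0_left f x0); [apply Hf; lra|].
      exists (x0 - a); split; [lra|]. intros e He. apply Hmin; lra.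
    - apply (is_derive_ge0_right f x0); [apply Hf; lra|].
      exists (b - x0); split; [lra|]. intros e He. apply Hmin; lra. }
  destruct (Rle_or_lt 0 L) as [ok|HL]; [exact ok|exfalso].
  apply is_derive_Reals in Hg.
  destruct (Hg (- L / 2)) as [r Hr]; [lra|].
  set (e := Rmin (b - x0) r / 2).
  assert (0 < Rmin (b - x0) r) by (apply Rmin_pos; [lra|apply cond_pos]).
  pose proof (Rmin_l (b - x0) r). pose proof (Rmin_r (b - x0) r).
  assert (He : 0 < e) by (unfold e; lra).
  (* g vanishes at x0 with slope L < 0, so it is negative just to the right *)
  assert (Hneg : forall c, x0 < c <= x0 + e -> g c < 0).
  { intros c Hc.
    specialize (Hr (c - x0) ltac:(lra) ltac:(rewrite Rabs_right; unfold e in Hc; lra)).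
    replace (x0 + (c - x0)) with c in Hr by ring. rewrite Hg0 in Hr.
    apply Rabs_def2 in Hr.
    destruct (Rlt_or_le (g c) 0) as [ok|Hc0]; [exact ok|exfalso].
    assert (0 <= g c / (c - x0)).
    { unfold Rdiv. pose proof (Rinv_0_lt_compat (c - x0) ltac:(lra)). nra. }
    lra. }
  destruct (MVT_cor2 f g x0 (x0 + e)) as [c [Hc1 Hc2]]; [lra| |].
  { intros c Hc. apply is_derive_Reals, Hf. unfold e in Hc; lra. }
  specialize (Hneg c ltac:(lra)). specialize (Hmin (x0 + e) ltac:(unfold e; lra)).
  replace (x0 + e - x0) with e in Hc1 by ring. nra.
Qed.

Lemma is_derive_neg_lt (f g : R -> R) a b : a < b ->
  (forall x, a <= x <= b -> continuity_pt f x) ->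
  (forall x, a < x < b -> is_derive f x (g x)) ->
  (forall x, a <= x <= b -> g x < 0) -> f b < f a.
Proof.
  intros Hab Hc Hd Hg.
  destruct (MVT_gen f a b g) as [c [Hc1 Hc2]];
    rewrite ?Rmin_left, ?Rmax_right in * by lra; [exact Hd|exact Hc|].
  specialize (Hg c Hc1). nra.
Qed.

Definition clamp (b z : R) : R := Rmax 0 (Rmin b z).

Lemma clamp_range b z : 0 <= b -> 0 <= clamp b z <= b.
Proof. intros Hb. unfold clamp, Rmax, Rmin. repeat destruct Rle_dec; lra. Qed.

Lemma clamp_lipschitz b z z' : 0 <= b -> Rabs (clamp b z' - clamp b z) <= Rabs (z' - z).
Proof. intros Hb. unfold clamp, Rmax, Rmin. repeat destruct Rle_dec; split_Rabs; lra. Qed.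

Lemma clamp_id b z : 0 <= z <= b -> clamp b z = z.
Proof. intros Hz. unfold clamp, Rmax, Rmin. repeat destruct Rle_dec; lra. Qed.

(* [E] is the continuous extension of [V_x] to the closure of [Q] minus [{t = 0}]. *)
Definition parabolic_regular (T : R) (s : R -> R) (V E : R -> R -> R) : Prop :=
  (forall x t, Qst_bar T s x t -> cont2_within (Qst_bar T s) V x t) /\
  (forall x t, Qst T s x t ->
     ex_derive (fun y => V y t) x /\ ex_derive (fun y => Dx V y t) x /\
     ex_derive (fun tau => V x tau) t /\ E x t = Dx V x t) /\
  (forall x t, Qst_bar_pos T s x t -> cont2_within (Qst_bar_pos T s) E x t).

Definition barrier (eps x t : R) : R := eps * t + eps * exp (- x).

Lemma continuity_2d_barrier eps x t : continuity_2d_pt (barrier eps) x t.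
Proof.
  apply continuity_2d_pt_plus; apply continuity_2d_pt_mult;
    try apply continuity_2d_pt_const; [apply continuity_2d_pt_id2|].
  apply (continuity_1d_2d_pt_comp exp (fun u _ => - u)).
  - apply derivable_continuous_pt, derivable_pt_exp.
  - apply continuity_2d_pt_opp, continuity_2d_pt_id1.
Qed.

Lemma Dx_barrier eps x t : Dx (barrier eps) x t = - eps * exp (- x).
Proof. apply is_derive_unique. unfold barrier. auto_derive; [exact I|ring]. Qed.

Lemma Dxx_barrier eps x t : Dx (Dx (barrier eps)) x t = eps * exp (- x).
Proof.
  unfold Dx at 1. rewrite (Derive_ext _ (fun y => - eps * exp (- y))) by (intros y; apply (Dx_barrier eps y t)).
  apply is_derive_unique. auto_derive; [exact I|ring].
Qed.

Lemma Dt_barrier eps x t : Dt (barrier eps) x t = eps.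
Proof. apply is_derive_unique. unfold barrier. auto_derive; [exact I|ring]. Qed.

Lemma barrier_regular T s eps :
  parabolic_regular T s (barrier eps) (fun x _ => - eps * exp (- x)).
Proof.
  split; [|split].
  - intros x t _. apply cont2_within_of_continuity_2d, continuity_2d_barrier.
  - intros x t _. unfold barrier. split; [|split; [|split]].
    + auto_derive; exact I.
    + apply (ex_derive_ext (fun y => - eps * exp (- y))); [intros; symmetry; apply Dx_barrier|].
      auto_derive; exact I.
    + auto_derive; exact I.
    + symmetry; apply Dx_barrier.
  - intros x t _. apply cont2_within_of_continuity_2d.
    apply (continuity_2d_pt_mult (fun _ _ => - eps) (fun u _ => exp (- u)));
      [apply continuity_2d_pt_const|].
    apply (continuity_1d_2d_pt_comp exp (fun u _ => - u)).
    + apply derivable_continuous_pt, derivable_pt_exp.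
    + apply continuity_2d_pt_opp, continuity_2d_pt_id1.
Qed.

Section MovingDomain.

Variables (T : R) (s : R -> R).
Hypothesis s_cont : forall t, clI T t -> cont_within (clI T) s t.
Hypothesis s_0 : s 0 = 0.
Hypothesis s_pos : forall t, ocI T t -> 0 < s t.
Hypothesis T_pos : 0 < T.

Lemma s_nonneg t : clI T t -> 0 <= s t.
Proof.
  intros [Ht0 HtT]. destruct (Rle_lt_or_eq_dec 0 t Ht0) as [Ht|<-].
  - left; apply s_pos; split; lra.
  - lra.
Qed.

Lemma Qst_locally x t : Qst T s x t -> locally x (fun y => Qst T s y t).
Proof.
  intros [Hx Ht]. assert (Hm : 0 < Rmin x (s t - x)) by (apply Rmin_pos; lra).
  exists (mkposreal _ Hm). intros y Hy. change (Rabs (y - x) < Rmin x (s t - x)) in Hy.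
  pose proof (Rmin_l x (s t - x)). pose proof (Rmin_r x (s t - x)).
  split; [split_Rabs; lra | exact Ht].
Qed.

Lemma slice_continuous V tau z : clI T tau ->
  (forall x, 0 <= x <= s tau -> cont2_within (Qst_bar T s) V x tau) ->
  continuity_pt (fun z => V (clamp (s tau) z) tau) z.
Proof.
  intros Htau HV. pose proof (s_nonneg tau Htau) as Hs.
  apply continuity_pt_filterlim, filterlim_locally. intros eps.
  destruct (cont2_within_ball _ _ _ _ (HV _ (clamp_range _ z Hs)) eps (cond_pos eps))
    as [d [Hd Hball]].
  exists (mkposreal d Hd). intros y Hy.
  change (Rabs (V (clamp (s tau) y) tau - V (clamp (s tau) z) tau) < eps).
  apply Hball.
  - pose proof (clamp_range _ y Hs). split; [lra|exact Htau].
  - eapply Rle_lt_trans; [apply clamp_lipschitz; exact Hs|exact Hy].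
  - rewrite Rminus_diag, Rabs_R0; exact Hd.
Qed.

Lemma ex_RInt_slice V tau a b : clI T tau -> 0 <= a <= b -> b <= s tau ->
  (forall x, 0 <= x <= s tau -> cont2_within (Qst_bar T s) V x tau) ->
  ex_RInt (fun x => V x tau) a b.
Proof.
  intros Htau Ha Hb HV.
  apply (ex_RInt_ext (fun z => V (clamp (s tau) z) tau)).
  { intros x Hx. rewrite Rmin_left, Rmax_right in Hx by lra.
    rewrite clamp_id; [reflexivity|lra]. }
  apply (@ex_RInt_continuous R_CompleteNormedModule). intros z _.
  apply continuity_pt_filterlim, slice_continuous; assumption.
Qed.

(* Approach (x, tau) from an earlier time t' along the ray x' = x s(t') / s(tau). *)
Lemma nonneg_of_nonneg_before V tau x : 0 < tau <= T ->
  cont2_within (Qst_bar T s) V x tau -> 0 <= x <= s tau ->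
  (forall x' t', Qst_bar T s x' t' -> t' < tau -> 0 <= V x' t') ->
  0 <= V x tau.
Proof.
  intros Htau HV Hx Hbefore.
  destruct (Rle_or_lt 0 (V x tau)) as [ok|Hneg]; [exact ok|exfalso].
  destruct (cont2_within_ball _ _ _ _ HV (- V x tau)) as [d1 [Hd1 HVball]]; [lra|].
  destruct (cont_within_ball _ _ _ (s_cont tau ltac:(split; lra)) d1 Hd1)
    as [d2 [Hd2 Hsball]].
  set (m := Rmin d1 d2).
  assert (0 < m) by (apply Rmin_pos; lra).
  assert (m <= d1) by apply Rmin_l. assert (m <= d2) by apply Rmin_r.
  set (t' := Rmax 0 (tau - m / 2)).
  assert (0 <= t') by apply Rmax_l. assert (tau - m / 2 <= t') by apply Rmax_r.
  assert (Ht' : t' < tau) by (unfold t', Rmax; destruct Rle_dec; lra).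
  assert (Hst : 0 < s tau) by (apply s_pos; split; lra).
  assert (Hst' : 0 <= s t') by (apply s_nonneg; split; lra).
  assert (Hds : Rabs (s t' - s tau) < d1).
  { apply Hsball; [split; lra|]. rewrite Rabs_left1; lra. }
  set (x' := x * s t' / s tau).
  assert (Hratio : 0 <= x / s tau <= 1).
  { split; [apply Rdiv_le_0_compat; lra|].
    apply (Rmult_le_reg_r (s tau)); [lra|]. field_simplify; lra. }
  assert (Hx' : 0 <= x' <= s t').
  { replace x' with (x / s tau * s t') by (unfold x'; field; lra). nra. }
  assert (Hxx : Rabs (x' - x) < d1).
  { replace (x' - x) with (x / s tau * (s t' - s tau)) by (unfold x'; field; lra).
    rewrite Rabs_mult, (Rabs_right (x / s tau)) by lra.
    pose proof (Rabs_pos (s t' - s tau)). nra. }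
  assert (HQ : Qst_bar T s x' t') by (split; lra).
  specialize (HVball x' t' HQ Hxx ltac:(rewrite Rabs_left1; lra)).
  specialize (Hbefore x' t' HQ Ht').
  apply Rabs_def2 in HVball. lra.
Qed.

Lemma pos_near_slice_point V tau y : clI T tau ->
  (forall x, 0 <= x <= s tau -> cont2_within (Qst_bar T s) V x tau) ->
  (forall x, 0 <= x <= s tau -> 0 < V x tau) -> 0 <= y <= 1 ->
  exists r, 0 < r /\ forall y' t, 0 <= y' <= 1 -> tau <= t <= T ->
    Rabs (y' - y) < r -> Rabs (t - tau) < r -> 0 < V (y' * s t) t.
Proof.
  intros Htau HV Hpos Hy. pose proof (s_nonneg tau Htau) as Hst. pose proof Htau as [Htau0 _].
  assert (Hx : 0 <= y * s tau <= s tau) by (split; nra).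
  destruct (cont2_within_ball _ _ _ _ (HV _ Hx) _ (Hpos _ Hx)) as [d1 [Hd1 HVball]].
  destruct (cont_within_ball _ _ _ (s_cont tau Htau) (d1 / 2)) as [d2 [Hd2 Hsball]]; [lra|].
  set (q := d1 / (2 * (1 + s tau))).
  assert (Hq : 0 < q) by (apply Rdiv_lt_0_compat; lra).
  assert (Hqs : q * s tau <= d1 / 2).
  { apply (Rmult_le_reg_r (2 * (1 + s tau))); [lra|].
    replace (q * s tau * (2 * (1 + s tau))) with (d1 * s tau) by (unfold q; field; lra).
    replace (d1 / 2 * (2 * (1 + s tau))) with (d1 * (1 + s tau)) by field. nra. }
  exists (Rmin d2 (Rmin d1 q)). split; [apply Rmin_pos; [|apply Rmin_pos]; lra|].
  intros y' t Hy' Ht Hyy Htt.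
  pose proof (Rmin_l d2 (Rmin d1 q)). pose proof (Rmin_r d2 (Rmin d1 q)).
  pose proof (Rmin_l d1 q). pose proof (Rmin_r d1 q).
  assert (Hst' : 0 <= s t) by (apply s_nonneg; split; lra).
  assert (HQ : Qst_bar T s (y' * s t) t) by (split; [split; nra|lra]).
  assert (Hds : Rabs (s t - s tau) < d1 / 2) by (apply Hsball; [split|]; lra).
  assert (Hxx : Rabs (y' * s t - y * s tau) < d1).
  { replace (y' * s t - y * s tau) with (y' * (s t - s tau) + (y' - y) * s tau) by ring.
    eapply Rle_lt_trans; [apply Rabs_triang|].
    rewrite !Rabs_mult, (Rabs_right (s tau)), (Rabs_right y') by lra.
    pose proof (Rabs_pos (s t - s tau)). pose proof (Rabs_pos (y' - y)). nra. }
  specialize (HVball _ _ HQ Hxx ltac:(lra)).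
  apply Rabs_def2 in HVball. lra.
Qed.

(* Compactness of the slice, parametrised by x = y s(t) with y in [0, 1]. *)
Lemma pos_slice_persists V tau : clI T tau ->
  (forall x, 0 <= x <= s tau -> cont2_within (Qst_bar T s) V x tau) ->
  (forall x, 0 <= x <= s tau -> 0 < V x tau) ->
  exists d, 0 < d /\
    forall x t, tau <= t <= T -> t < tau + d -> 0 <= x <= s t -> 0 < V x t.
Proof.
  intros Htau HV Hpos. pose proof Htau as [Htau0 _].
  assert (Hr : forall y, exists r : posreal, 0 <= y <= 1 ->
    forall y' t, 0 <= y' <= 1 -> tau <= t <= T ->
      Rabs (y' - y) < r -> Rabs (t - tau) < r -> 0 < V (y' * s t) t).
  { intros y. destruct (Rle_dec 0 y) as [Hy0|]; [destruct (Rle_dec y 1) as [Hy1|]|].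
    2,3: exists (mkposreal 1 Rlt_0_1); intros; lra.
    destruct (pos_near_slice_point V tau y) as [r [Hr0 Hry]]; auto.
    exists (mkposreal r Hr0). intros _. exact Hry. }
  destruct (compactness_value_1d 0 1
    (fun y => proj1_sig (constructive_indefinite_description _ (Hr y)))) as [d Hd].
  exists d. split; [apply cond_pos|].
  intros x t Ht Htd Hx.
  assert (Hst : 0 <= s t) by (apply s_nonneg; split; lra).
  set (y' := if Req_EM_T (s t) 0 then 0 else x / s t).
  assert (Hxy : y' * s t = x).
  { unfold y'. destruct Req_EM_T as [e|e]; [rewrite e in Hx |- *; lra|field; auto]. }
  assert (Hy' : 0 <= y' <= 1).
  { unfold y'. destruct Req_EM_T as [e|e]; [lra|].
    split; [apply Rdiv_le_0_compat; lra|].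
    apply (Rmult_le_reg_r (s t)); [lra|]. field_simplify; lra. }
  destruct (Rlt_or_le 0 (V x t)) as [ok|Hneg]; [exact ok|exfalso].
  apply (Hd y' Hy'). intros [y [Hy [H1 H2]]].
  destruct (constructive_indefinite_description _ (Hr y)) as [r Hry]; simpl in *.
  rewrite <- Hxy in Hneg.
  pose proof (Hry Hy y' t Hy' Ht H1 ltac:(rewrite Rabs_right; lra)). lra.
Qed.

Section StrictSupersolution.

Variables V E : R -> R -> R.
Hypothesis V_reg : parabolic_regular T s V E.
Hypothesis V_strict : forall x t, Qst T s x t -> Dx (Dx V) x t < Dt V x t.
Hypothesis E_neg : forall t, ocI T t -> E 0 t < 0.
Hypothesis V_bdry : forall t, clI T t -> 0 < V (s t) t.

Lemma V_cont_slice tau x : clI T tau -> 0 <= x <= s tau ->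
  cont2_within (Qst_bar T s) V x tau.
Proof. intros Htau Hx. apply (proj1 V_reg). split; [exact Hx|exact Htau]. Qed.

Lemma decrease_from_neumann_end tau : 0 < tau < T ->
  exists b, 0 < b <= s tau /\ V b tau < V 0 tau.
Proof.
  intros Htau. destruct V_reg as [_ [HVd HEc]].
  assert (Hst : 0 < s tau) by (apply s_pos; split; lra).
  assert (HE0 : E 0 tau < 0) by (apply E_neg; split; lra).
  destruct (cont2_within_ball _ _ _ _ (HEc 0 tau ltac:(split; lra)) (- E 0 tau))
    as [d [Hd HEball]]; [lra|].
  set (b := Rmin d (s tau) / 2).
  assert (0 < Rmin d (s tau)) by (apply Rmin_pos; lra).
  pose proof (Rmin_l d (s tau)). pose proof (Rmin_r d (s tau)).
  exists b. split; [unfold b; lra|].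
  pose proof (is_derive_neg_lt (fun z => V (clamp (s tau) z) tau) (fun z => E z tau) 0 b)
    as Hlt; simpl in Hlt.
  rewrite (clamp_id (s tau) b), (clamp_id (s tau) 0) in Hlt by (unfold b; lra).
  apply Hlt; [unfold b; lra| | |].
  - intros z _. apply slice_continuous; [split; lra|].
    intros x Hx. apply V_cont_slice; [split; lra|exact Hx].
  - intros z Hz. assert (HQ : Qst T s z tau) by (split; unfold b in Hz; lra).
    destruct (HVd z tau HQ) as [Hdz [_ [_ ->]]].
    apply (is_derive_ext_loc (fun y => V y tau)); [|exact (Derive_correct _ _ Hdz)].
    apply (filter_imp (fun y => Qst T s y tau)); [|exact (Qst_locally z tau HQ)].
    intros y [Hy _]. rewrite clamp_id; [reflexivity|lra].
  - intros z Hz. unfold b in Hz.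
    specialize (HEball z tau ltac:(split; lra)
      ltac:(rewrite Rminus_0_r, Rabs_right; lra) ltac:(rewrite Rminus_diag, Rabs_R0; lra)).
    apply Rabs_def2 in HEball. lra.
Qed.

(* At an interior zero of the slice, [V_t <= 0] since [V > 0] just before, and
   [V_xx >= 0] since the zero is a minimum of the slice; this contradicts [V_xx < V_t]. *)
Lemma interior_slice_zero_absurd tau x0 : 0 < tau < T -> 0 < x0 < s tau ->
  (forall x, 0 <= x <= s tau -> 0 <= V x tau) ->
  (forall x t, Qst_bar T s x t -> t < tau -> 0 < V x t) ->
  V x0 tau <> 0.
Proof.
  intros Htau Hx0 Hslice Hbefore HV0.
  assert (HQ : Qst T s x0 tau) by (split; lra).
  destruct V_reg as [_ [HVd _]].
  destruct (HVd x0 tau HQ) as [_ [Hdxx [Hdt _]]].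
  assert (Hdt_le : Dt V x0 tau <= 0).
  { apply (is_derive_le0_left (fun u => V x0 u) tau); [exact (Derive_correct _ _ Hdt)|].
    destruct (cont_within_ball _ _ _ (s_cont tau ltac:(split; lra)) (s tau - x0))
      as [d [Hd Hsball]]; [lra|].
    exists (Rmin d tau). split; [apply Rmin_pos; lra|].
    intros e He. pose proof (Rmin_l d tau). pose proof (Rmin_r d tau).
    rewrite HV0. left. apply Hbefore; [|lra].
    specialize (Hsball (tau - e) ltac:(split; lra) ltac:(rewrite Rabs_left; lra)).
    apply Rabs_def2 in Hsball. split; lra. }
  assert (Hdxx_ge : 0 <= Dx (Dx V) x0 tau).
  { apply (is_derive2_ge0_at_min (fun y => V y tau) (fun y => Dx V y tau) 0 (s tau) x0);
      [lra| | |].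
    - intros x Hx. apply Derive_correct, (HVd x tau). split; lra.
    - exact (Derive_correct _ _ Hdxx).
    - intros x Hx. rewrite HV0. apply Hslice. lra. }
  specialize (V_strict x0 tau HQ). lra.
Qed.

Lemma slice_pos tau : 0 <= tau < T ->
  (forall x t, Qst_bar T s x t -> t < tau -> 0 < V x t) ->
  forall x, 0 <= x <= s tau -> 0 < V x tau.
Proof.
  intros Htau Hbefore x Hx.
  destruct (Rle_lt_or_eq_dec 0 tau (proj1 Htau)) as [Htau0|<-].
  2:{ rewrite s_0 in Hx. replace x with (s 0) by (rewrite s_0; lra).
      apply V_bdry. split; lra. }
  assert (Hslice : forall x, 0 <= x <= s tau -> 0 <= V x tau).
  { intros x' Hx'. apply (nonneg_of_nonneg_before V tau x'); [lra| |exact Hx'|].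
    - apply V_cont_slice; [split|]; lra.
    - intros x'' t'' HQ Ht''. left. exact (Hbefore x'' t'' HQ Ht''). }
  destruct (Rle_lt_or_eq_dec 0 (V x tau) (Hslice x Hx)) as [ok|HV0]; [exact ok|exfalso].
  destruct (Rle_lt_or_eq_dec x (s tau) (proj2 Hx)) as [Hxs| ->].
  2:{ specialize (V_bdry tau ltac:(split; lra)). lra. }
  destruct (Rle_lt_or_eq_dec 0 x (proj1 Hx)) as [Hx0|<-].
  - exact (interior_slice_zero_absurd tau x ltac:(lra) ltac:(lra) Hslice Hbefore
             (eq_sym HV0)).
  - destruct (decrease_from_neumann_end tau ltac:(lra)) as [b [Hb HVb]].
    specialize (Hslice b ltac:(lra)). lra.
Qed.

(* Continuity argument on the supremum of the times up to which [V > 0]. *)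
Lemma strict_max_principle : forall x t, Qst_bar T s x t -> t < T -> 0 < V x t.
Proof.
  set (S := fun u => 0 <= u < T /\ forall x t, Qst_bar T s x t -> t <= u -> 0 < V x t).
  assert (HS0 : S 0).
  { split; [lra|]. intros x t HQ Ht. replace t with 0 in * by (destruct HQ; lra).
    apply slice_pos; [lra| |apply HQ]. intros x' t' HQ' Ht'. destruct HQ'; lra. }
  destruct (completeness S) as [tau [Hub Hlub]].
  { exists T. intros u Su. left; apply Su. }
  { exists 0; exact HS0. }
  assert (Htau0 : 0 <= tau) by (apply Hub; exact HS0).
  assert (Hbefore : forall x t, Qst_bar T s x t -> t < tau -> 0 < V x t).
  { intros x t HQ Ht.
    destruct (classic (exists u, S u /\ t <= u)) as [[u [Su Hu]]|Hn].
    - exact (proj2 Su x t HQ Hu).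
    - exfalso. assert (tau <= t); [|lra]. apply Hlub. intros u Su.
      destruct (Rle_or_lt u t) as [h|h]; [exact h|]. exfalso; apply Hn; exists u; split; [exact Su|lra]. }
  destruct (Rlt_or_le tau T) as [HtauT|HTtau].
  - exfalso.
    assert (Hslice := slice_pos tau ltac:(lra) Hbefore).
    destruct (pos_slice_persists V tau ltac:(split; lra)) as [d [Hd Hpers]]; auto.
    { intros x Hx. apply V_cont_slice; [split; lra|exact Hx]. }
    pose proof (Rmin_l ((tau + T) / 2) (tau + d / 2)).
    pose proof (Rmin_r ((tau + T) / 2) (tau + d / 2)).
    set (t1 := Rmin ((tau + T) / 2) (tau + d / 2)) in *.
    assert (tau < t1) by (unfold t1, Rmin; destruct Rle_dec; lra).
    assert (HS1 : S t1).
    { split; [lra|]. intros x t HQ Ht. destruct (Rlt_or_le t tau) as [h|h].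
      - exact (Hbefore x t HQ h).
      - destruct HQ as [Hx Ht']. apply Hpers; lra. }
    specialize (Hub t1 HS1). lra.
  - intros x t HQ Ht. apply Hbefore; [exact HQ|lra].
Qed.

End StrictSupersolution.

Lemma parabolic_regular_plus V1 E1 V2 E2 :
  parabolic_regular T s V1 E1 -> parabolic_regular T s V2 E2 ->
  parabolic_regular T s (fun x t => V1 x t + V2 x t) (fun x t => E1 x t + E2 x t) /\
  forall x t, Qst T s x t ->
    Dt (fun x t => V1 x t + V2 x t) x t = Dt V1 x t + Dt V2 x t /\
    Dx (Dx (fun x t => V1 x t + V2 x t)) x t = Dx (Dx V1) x t + Dx (Dx V2) x t.
Proof.
  intros [HC1 [HD1 HE1]] [HC2 [HD2 HE2]].
  assert (HDx : forall x t, Qst T s x t ->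
    locally x (fun y => Dx (fun x t => V1 x t + V2 x t) y t = Dx V1 y t + Dx V2 y t)).
  { intros x t HQ. apply (filter_imp (fun y => Qst T s y t)); [|exact (Qst_locally x t HQ)].
    intros y Hy. unfold Dx. apply Derive_plus; [apply (HD1 y t Hy)|apply (HD2 y t Hy)]. }
  split; [split; [|split]|].
  - intros x t HQ. apply cont2_within_plus; auto.
  - intros x t HQ.
    destruct (HD1 x t HQ) as [Hx1 [Hxx1 [Ht1 ->]]]. destruct (HD2 x t HQ) as [Hx2 [Hxx2 [Ht2 ->]]].
    split; [exact (ex_derive_plus (fun y => V1 y t) _ x Hx1 Hx2)|]. split; [|split].
    + apply (ex_derive_ext_loc (fun y => Dx V1 y t + Dx V2 y t)).
      { apply (filter_imp _ _ (fun y Hy => eq_sym Hy) (HDx x t HQ)). }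
      exact (ex_derive_plus (fun y => Dx V1 y t) _ x Hxx1 Hxx2).
    + exact (ex_derive_plus (fun tau => V1 x tau) _ t Ht1 Ht2).
    + symmetry. exact (locally_singleton _ _ (HDx x t HQ)).
  - intros x t HQ. apply cont2_within_plus; auto.
  - intros x t HQ. destruct (HD1 x t HQ) as [_ [Hxx1 [Ht1 _]]].
    destruct (HD2 x t HQ) as [_ [Hxx2 [Ht2 _]]]. split.
    + exact (Derive_plus (fun tau => V1 x tau) _ t Ht1 Ht2).
    + transitivity (Derive (fun y => Dx V1 y t + Dx V2 y t) x).
      * exact (Derive_ext_loc _ _ _ (HDx x t HQ)).
      * exact (Derive_plus (fun y => Dx V1 y t) _ x Hxx1 Hxx2).
Qed.

Lemma parabolic_regular_opp V E :
  parabolic_regular T s V E ->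
  parabolic_regular T s (fun x t => - V x t) (fun x t => - E x t) /\
  forall x t, Qst T s x t ->
    Dt (fun x t => - V x t) x t = - Dt V x t /\
    Dx (Dx (fun x t => - V x t)) x t = - Dx (Dx V) x t.
Proof.
  intros [HC [HD HE]].
  assert (HDx : forall x t, Qst T s x t ->
    locally x (fun y => Dx (fun x t => - V x t) y t = - Dx V y t)).
  { intros x t HQ. apply (filter_imp (fun y => Qst T s y t)); [|exact (Qst_locally x t HQ)].
    intros y Hy. unfold Dx. apply Derive_opp. }
  split; [split; [|split]|].
  - intros x t HQ. apply cont2_within_opp; auto.
  - intros x t HQ. destruct (HD x t HQ) as [Hx [Hxx [Ht ->]]].
    split; [exact (ex_derive_opp (fun y => V y t) x Hx)|]. split; [|split].
    + apply (ex_derive_ext_loc (fun y => - Dx V y t)).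
      { apply (filter_imp _ _ (fun y Hy => eq_sym Hy) (HDx x t HQ)). }
      exact (ex_derive_opp (fun y => Dx V y t) x Hxx).
    + exact (ex_derive_opp (fun tau => V x tau) t Ht).
    + symmetry. exact (locally_singleton _ _ (HDx x t HQ)).
  - intros x t HQ. apply cont2_within_opp; auto.
  - intros x t HQ. split.
    + exact (Derive_opp (fun tau => V x tau) t).
    + transitivity (Derive (fun y => - Dx V y t) x).
      * exact (Derive_ext_loc _ _ _ (HDx x t HQ)).
      * exact (Derive_opp (fun y => Dx V y t) x).
Qed.

(* [W + barrier eps] is a strict supersolution; let [eps] go to 0. *)
Lemma weak_max_principle W E : parabolic_regular T s W E ->
  (forall x t, Qst T s x t -> Dt W x t = Dx (Dx W) x t) ->
  (forall t, ocI T t -> E 0 t <= 0) ->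
  (forall t, clI T t -> 0 <= W (s t) t) ->
  forall x t, Qst_bar T s x t -> 0 <= W x t.
Proof.
  intros HW Hheat HE Hbdry.
  assert (Hbefore : forall x t, Qst_bar T s x t -> t < T -> 0 <= W x t).
  { intros x t HQ Ht.
    assert (Hpert : forall eps, 0 < eps -> 0 < W x t + barrier eps x t).
    { intros eps Heps.
      destruct (parabolic_regular_plus _ _ _ _ HW (barrier_regular T s eps)) as [Hreg Hder].
      apply (strict_max_principle _ _ Hreg); [| | |exact HQ|exact Ht].
      - intros x' t' HQ'. destruct (Hder x' t' HQ') as [-> ->].
        rewrite Hheat, Dt_barrier, Dxx_barrier by exact HQ'.
        assert (exp (- x') < 1) by (rewrite <- exp_0; apply exp_increasing; destruct HQ'; lra).
        nra.
      - intros t' Ht'. rewrite Ropp_0, exp_0. specialize (HE t' Ht'). lra.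
      - intros t' Ht'. specialize (Hbdry t' Ht'). destruct Ht'.
        pose proof (exp_pos (- s t')). unfold barrier. nra. }
    destruct (Rle_or_lt 0 (W x t)) as [ok|Hneg]; [exact ok|exfalso].
    assert (Hpos : 0 < t + exp (- x)) by (pose proof (exp_pos (- x)); destruct HQ; lra).
    specialize (Hpert (- W x t / (2 * (t + exp (- x))))).
    unfold barrier in Hpert.
    replace (- W x t / (2 * (t + exp (- x))) * t + - W x t / (2 * (t + exp (- x))) * exp (- x))
      with (- W x t / 2) in Hpert by (field; lra).
    assert (0 < - W x t / (2 * (t + exp (- x)))) by (apply Rdiv_lt_0_compat; lra).
    specialize (Hpert ltac:(lra)). lra. }
  intros x t HQ. destruct (Rlt_or_le t T) as [Ht|Ht]; [exact (Hbefore x t HQ Ht)|].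
  assert (t = T) as -> by (destruct HQ; lra).
  apply (nonneg_of_nonneg_before W T x); [lra|apply (proj1 HW), HQ|apply HQ|].
  intros x' t' HQ' Ht'. exact (Hbefore x' t' HQ' Ht').
Qed.

End MovingDomain.

Lemma parabolic_regular_subdomain T s1 s2 V E :
  (forall t, clI T t -> s1 t <= s2 t) ->
  parabolic_regular T s2 V E -> parabolic_regular T s1 V E.
Proof.
  intros Hle [HC [HD HE]].
  assert (Hs : forall x t, 0 <= t <= T -> x <= s1 t -> x <= s2 t).
  { intros x t Ht Hx. apply (Rle_trans _ _ _ Hx), Hle, Ht. }
  split; [|split].
  - intros x t HQ. apply (cont2_within_subdomain (Qst_bar T s2)).
    + intros x' t' [Hx' Ht']. split; [split; [|apply Hs]|]; tauto.
    + apply HC. destruct HQ as [Hx Ht]. split; [split; [|apply Hs]|]; tauto.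
  - intros x t [Hx Ht]. apply HD. split; [split; [|apply (Rlt_le_trans _ (s1 t))]|]; try tauto.
    apply Hle. split; lra.
  - intros x t HQ. apply (cont2_within_subdomain (Qst_bar_pos T s2)).
    + intros x' t' [Hx' Ht']. split; [split; [|apply Hs]|]; try tauto; lra.
    + apply HE. destruct HQ as [Hx Ht]. split; [split; [|apply Hs]|]; try tauto; lra.
Qed.

Lemma FBNP_sol_regular T s h U : FBNP_sol T s h U ->
  exists E, parabolic_regular T s U E /\
    (forall x t, Qst T s x t -> Dt U x t = Dx (Dx U) x t) /\
    (forall t, ocI T t -> E 0 t = - h t) /\
    (forall t, clI T t -> U (s t) t = 0).
Proof.
  intros [HC [HD [[E [HE [HEc HEn]]] [Hheat [_ Hbdry]]]]].
  exists E. split; [split; [exact HC|split; [|exact HEc]]|split; [exact Hheat|split; [|exact Hbdry]]].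
  - intros x t HQ. destruct (HD x t HQ) as [H1 [H2 [H3 _]]]. auto.
  - intros t Ht. rewrite <- (HEn t Ht). ring.
Qed.

Lemma FBNP_sol_nonneg T s h U : 0 < T -> boundary_fun T s ->
  (forall t, ocI T t -> 0 <= h t) -> FBNP_sol T s h U ->
  forall x t, Qst_bar T s x t -> 0 <= U x t.
Proof.
  intros HT [Hs [_ [Hs0 Hspos]]] Hh HU.
  destruct (FBNP_sol_regular _ _ _ _ HU) as [E [Hreg [Hheat [HEn Hbdry]]]].
  apply (weak_max_principle T s Hs Hs0 Hspos HT U E Hreg Hheat).
  - intros t Ht. rewrite HEn by exact Ht. specialize (Hh t Ht). lra.
  - intros t Ht. rewrite Hbdry by exact Ht. lra.
Qed.

Lemma FBNP_sol_le T h s1 s2 U1 U2 : 0 < T ->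
  boundary_fun T s1 -> boundary_fun T s2 -> (forall t, clI T t -> s1 t <= s2 t) ->
  (forall t, ocI T t -> 0 <= h t) -> FBNP_sol T s1 h U1 -> FBNP_sol T s2 h U2 ->
  forall x t, Qst_bar T s1 x t -> U1 x t <= U2 x t.
Proof.
  intros HT Hb1 Hb2 Hle Hh HU1 HU2 x t HQ.
  pose proof Hb1 as [Hs1 [_ [Hs10 Hs1pos]]].
  destruct (FBNP_sol_regular _ _ _ _ HU1) as [E1 [Hreg1 [Hheat1 [HEn1 Hbdry1]]]].
  destruct (FBNP_sol_regular _ _ _ _ HU2) as [E2 [Hreg2 [Hheat2 [HEn2 _]]]].
  destruct (parabolic_regular_opp T s1 _ _ Hreg1) as [Hopp Hder_opp].
  destruct (parabolic_regular_plus T s1 _ _ _ _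
              (parabolic_regular_subdomain T s1 s2 _ _ Hle Hreg2) Hopp) as [Hreg Hder].
  enough (0 <= U2 x t + - U1 x t) by lra.
  apply (weak_max_principle T s1 Hs1 Hs10 Hs1pos HT _ _ Hreg); [| | |exact HQ].
  - intros x' t' HQ'.
    assert (HQ2 : Qst T s2 x' t').
    { destruct HQ' as [Hx Ht]. split; [split|exact Ht]; [lra|].
      apply (Rlt_le_trans _ (s1 t')); [lra|apply Hle; split; lra]. }
    destruct (Hder x' t' HQ') as [-> ->]. destruct (Hder_opp x' t' HQ') as [-> ->].
    rewrite (Hheat1 x' t' HQ'), (Hheat2 x' t' HQ2). reflexivity.
  - intros t' Ht'. simpl. rewrite HEn1, HEn2 by exact Ht'. lra.
  - intros t' Ht'. simpl. rewrite Hbdry1, Ropp_0, Rplus_0_r by exact Ht'.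
    apply (FBNP_sol_nonneg T s2 h U2 HT Hb2 Hh HU2).
    pose proof (s_nonneg T s1 Hs10 Hs1pos t' Ht'). pose proof (Hle t' Ht').
    split; [lra|exact Ht'].
Qed.

Theorem lemma1 (T : R) (h : R -> R) (Usol : (R -> R) -> R -> R -> R) :
  0 < T ->
  (forall t, clI T t -> cont_within (clI T) h t) ->
  (forall t, clI T t -> 0 < h t) ->
  (forall s, boundary_fun T s -> FBNP_sol T s h (Usol s)) ->
  forall s1 s2 : R -> R,
    boundary_fun T s1 -> boundary_fun T s2 ->
    (forall t, clI T t -> s1 t <= s2 t) ->
    forall t, clI T t -> Rop h Usol s2 t <= Rop h Usol s1 t.
Proof.
  intros HT _ Hhpos Hsol s1 s2 Hb1 Hb2 Hle t Ht.
  assert (Hh : forall t, ocI T t -> 0 <= h t).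
  { intros t' [? ?]. left. apply Hhpos. split; lra. }
  pose proof (Hsol s1 Hb1) as HU1. pose proof (Hsol s2 Hb2) as HU2.
  pose proof Hb1 as [_ [_ [Hs10 Hs1pos]]].
  pose proof (s_nonneg T s1 Hs10 Hs1pos t Ht). pose proof (Hle t Ht).
  assert (HI : forall s a b, boundary_fun T s -> 0 <= a <= b -> b <= s t ->
                 ex_RInt (fun x => Usol s x t) a b).
  { intros s a b Hb Hab Hbs. pose proof Hb as [_ [_ [Hs0 Hspos]]].
    apply (ex_RInt_slice T s Hs0 Hspos); [exact Ht|exact Hab|exact Hbs|].
    intros x Hx. apply (proj1 (Hsol s Hb)). split; [exact Hx|exact Ht]. }
  unfold Rop.
  rewrite <- (RInt_Chasles (fun x => Usol s2 x t) 0 (s1 t) (s2 t)) by (apply HI; auto; lra).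
  assert (RInt (fun x => Usol s1 x t) 0 (s1 t) <= RInt (fun x => Usol s2 x t) 0 (s1 t)).
  { apply RInt_le; [lra|apply HI; auto; lra|apply HI; auto; lra|].
    intros x Hx. apply (FBNP_sol_le T h s1 s2); auto. split; [lra|exact Ht]. }
  assert (0 <= RInt (fun x => Usol s2 x t) (s1 t) (s2 t)).
  { apply RInt_ge_0; [lra|apply HI; auto; lra|].
    intros x Hx. apply (FBNP_sol_nonneg T s2 h); auto. split; [lra|exact Ht]. }
  simpl. unfold plus. simpl. lra.
Qed.
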